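(* Let $\lambda$ be a positive integer, $\psi_0\in\mathbb{R}$ and $G(\psi)=\cos(\lambda\psi+\psi_0)$. Then the function $$\left(p_r+\frac{p_\psi}{\lambda r}\frac{\partial}{\partial\psi}\right)^\lambda G(\psi)$$ (the operator in brackets applied $\lambda$ times to $G$) is a constant of motion of the geodesic Hamiltonian $H_g=\frac12\left(p_r^2+\frac{p_\psi^2}{r^2}\right)$.
   Context: Phase space coordinates are $(r,\psi,p_r,p_\psi)$ with $r>0$ (polar coordinates on the Euclidean plane) and canonical Poisson bracket; $p_r$, $p_\psi$, $1/(\lambda r)$ act by multiplication. A constant of motion is a function with vanishing Poisson bracket with the Hamiltonian. *)

From Stdlib Require Import Reals ClassicalEpsilon.
Open Scope R_scope.

(* Phase-space functions F r psi p_r p_psi  (polar coordinates, r > 0). *)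
Definition phase_fun := R -> R -> R -> R -> R.

(* Partial derivative with respect to psi: the derivative of
   t |-> F r t pr ppsi at psi (chosen by epsilon; for the smooth
   functions considered here it is the unique derivative). *)
Definition d_psi (F : phase_fun) : phase_fun :=
  fun r psi pr ppsi =>
    epsilon (inhabits 0)
      (fun l => derivable_pt_lim (fun t => F r t pr ppsi) psi l).

Definition Dop (lam : R) (F : phase_fun) : phase_fun :=
  fun r psi pr ppsi => pr * F r psi pr ppsi + ppsi / (lam * r) * d_psi F r psi pr ppsi.

Definition Hg : phase_fun :=
  fun r psi pr ppsi => / 2 * (pr ^ 2 + ppsi ^ 2 / r ^ 2).

Definition constant_of_motion (F H : phase_fun) : Prop :=
  forall r psi pr ppsi, 0 < r ->
    exists Fr Fpsi Fpr Fppsi Hr Hpsi Hpr Hppsi : R,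
      derivable_pt_lim (fun t => F t psi pr ppsi) r Fr /\
      derivable_pt_lim (fun t => F r t pr ppsi) psi Fpsi /\
      derivable_pt_lim (fun t => F r psi t ppsi) pr Fpr /\
      derivable_pt_lim (fun t => F r psi pr t) ppsi Fppsi /\
      derivable_pt_lim (fun t => H t psi pr ppsi) r Hr /\
      derivable_pt_lim (fun t => H r t pr ppsi) psi Hpsi /\
      derivable_pt_lim (fun t => H r psi t ppsi) pr Hpr /\
      derivable_pt_lim (fun t => H r psi pr t) ppsi Hppsi /\
      Fr * Hpr - Fpr * Hr + Fpsi * Hppsi - Fppsi * Hpsi = 0.

(** With [q = p_psi / r] and [theta = lam psi + psi0], the [k]-th iterate of the
    operator on [cos theta] is [Re ((p_r + i q)^k e^(i theta))]: each application
    multiplies by [p_r + i q], because [d/dpsi] acts on [e^(i theta)] as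
    multiplication by [i lam], which the factor [1/(lam r)] turns into [i/r].
    Since [z^k] is holomorphic in [z = p_r + i q], its partial derivatives in
    [p_r] and [q] are governed by [k z^(k-1)]; inserting them into the Poisson
    bracket with [H_g] leaves [(k - lam) (p_psi/r^2) Im (z^k e^(i theta))],
    which vanishes exactly for [k = lam]. *)

From Stdlib Require Import Reals ClassicalEpsilon FunctionalExtensionality Lra Lia.
From Coquelicot Require Import Coquelicot.
Open Scope R_scope.

Lemma derivable_pt_lim_val_eq f x l l' :
  derivable_pt_lim f x l -> l = l' -> derivable_pt_lim f x l'.
Proof. now intros Hf <-. Qed.

Lemma d_psi_eq F r psi pr ppsi l :
  derivable_pt_lim (fun t => F r t pr ppsi) psi l -> d_psi F r psi pr ppsi = l.
Proof.
  intros Hl; unfold d_psi.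
  apply (uniqueness_limite (fun t => F r t pr ppsi) psi); [|exact Hl].
  apply epsilon_spec; now exists l.
Qed.

(** [wave k p q th] is the pair (real part, imaginary part) of [(p + i q)^k e^(i th)]. *)
Fixpoint wave (k : nat) (p q th : R) : R * R :=
  match k with
  | O => (cos th, sin th)
  | S k => let w := wave k p q th in (p * fst w - q * snd w, p * snd w + q * fst w)
  end.

Definition wave_re k p q th := fst (wave k p q th).
Definition wave_im k p q th := snd (wave k p q th).

Lemma wave_re_S k p q th :
  wave_re (S k) p q th = p * wave_re k p q th - q * wave_im k p q th.
Proof. reflexivity. Qed.

Lemma wave_im_S k p q th :
  wave_im (S k) p q th = p * wave_im k p q th + q * wave_re k p q th.
Proof. reflexivity. Qed.

Lemma INR_mul_wave_re_pred k p q th :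
  INR k * (p * wave_re (pred k) p q th - q * wave_im (pred k) p q th)
  = INR k * wave_re k p q th.
Proof. destruct k; [simpl; ring | reflexivity]. Qed.

Lemma INR_mul_wave_im_pred k p q th :
  INR k * (p * wave_im (pred k) p q th + q * wave_re (pred k) p q th)
  = INR k * wave_im k p q th.
Proof. destruct k; [simpl; ring | reflexivity]. Qed.

Lemma derivable_pt_lim_wave_th k p q th :
  derivable_pt_lim (fun t => wave_re k p q t) th (- wave_im k p q th) /\
  derivable_pt_lim (fun t => wave_im k p q t) th (wave_re k p q th).
Proof.
  induction k as [|k [IHre IHim]].
  - split; [apply derivable_pt_lim_cos | apply derivable_pt_lim_sin].
  - split; eapply derivable_pt_lim_val_eq.
    + apply derivable_pt_lim_minus; apply derivable_pt_lim_scal; eassumption.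
    + rewrite ?wave_re_S, ?wave_im_S; ring.
    + apply derivable_pt_lim_plus; apply derivable_pt_lim_scal; eassumption.
    + rewrite ?wave_re_S, ?wave_im_S; ring.
Qed.

Lemma derivable_pt_lim_wave_p k p q th :
  derivable_pt_lim (fun t => wave_re k t q th) p (INR k * wave_re (pred k) p q th) /\
  derivable_pt_lim (fun t => wave_im k t q th) p (INR k * wave_im (pred k) p q th).
Proof.
  induction k as [|k [IHre IHim]].
  - split; eapply derivable_pt_lim_val_eq;
      [apply derivable_pt_lim_const | simpl; ring | apply derivable_pt_lim_const | simpl; ring].
  - change (fun t => wave_re (S k) t q th)
      with (fun t => t * wave_re k t q th - q * wave_im k t q th).
    change (fun t => wave_im (S k) t q th)
      with (fun t => t * wave_im k t q th + q * wave_re k t q th).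
    split; eapply derivable_pt_lim_val_eq.
    + apply derivable_pt_lim_minus;
        [apply derivable_pt_lim_mult; [apply derivable_pt_lim_id | exact IHre]
        | apply derivable_pt_lim_scal; exact IHim].
    + pose proof (INR_mul_wave_re_pred k p q th); cbv beta; simpl pred; rewrite S_INR; lra.
    + apply derivable_pt_lim_plus;
        [apply derivable_pt_lim_mult; [apply derivable_pt_lim_id | exact IHim]
        | apply derivable_pt_lim_scal; exact IHre].
    + pose proof (INR_mul_wave_im_pred k p q th); cbv beta; simpl pred; rewrite S_INR; lra.
Qed.

Lemma derivable_pt_lim_wave_q k p q th :
  derivable_pt_lim (fun t => wave_re k p t th) q (- INR k * wave_im (pred k) p q th) /\
  derivable_pt_lim (fun t => wave_im k p t th) q (INR k * wave_re (pred k) p q th).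
Proof.
  induction k as [|k [IHre IHim]].
  - split; eapply derivable_pt_lim_val_eq;
      [apply derivable_pt_lim_const | simpl; ring | apply derivable_pt_lim_const | simpl; ring].
  - change (fun t => wave_re (S k) p t th)
      with (fun t => p * wave_re k p t th - t * wave_im k p t th).
    change (fun t => wave_im (S k) p t th)
      with (fun t => p * wave_im k p t th + t * wave_re k p t th).
    split; eapply derivable_pt_lim_val_eq.
    + apply derivable_pt_lim_minus;
        [apply derivable_pt_lim_scal; exact IHre
        | apply derivable_pt_lim_mult; [apply derivable_pt_lim_id | exact IHim]].
    + pose proof (INR_mul_wave_im_pred k p q th); cbv beta; simpl pred; rewrite S_INR; lra.
    + apply derivable_pt_lim_plus;
        [apply derivable_pt_lim_scal; exact IHim
        | apply derivable_pt_lim_mult; [apply derivable_pt_lim_id | exact IHre]].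
    + pose proof (INR_mul_wave_re_pred k p q th); cbv beta; simpl pred; rewrite S_INR; lra.
Qed.

Definition wave_phase (L psi0 : R) (k : nat) : phase_fun :=
  fun r psi pr ppsi => wave_re k pr (ppsi / r) (L * psi + psi0).

Lemma derivable_pt_lim_wave_phase_psi L psi0 k r psi pr ppsi :
  derivable_pt_lim (fun t => wave_phase L psi0 k r t pr ppsi) psi
    (- L * wave_im k pr (ppsi / r) (L * psi + psi0)).
Proof.
  eapply derivable_pt_lim_val_eq.
  - apply (derivable_pt_lim_comp (fun t => L * t + psi0) (fun th => wave_re k pr (ppsi / r) th)).
    + apply is_derive_Reals; auto_derive; [exact I | reflexivity].
    + apply derivable_pt_lim_wave_th.
  - ring.
Qed.

Lemma Dop_wave_phase L psi0 k : L <> 0 -> Dop L (wave_phase L psi0 k) = wave_phase L psi0 (S k).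
Proof.
  intros HL.
  apply functional_extensionality; intros r; apply functional_extensionality; intros psi.
  apply functional_extensionality; intros pr; apply functional_extensionality; intros ppsi.
  unfold Dop. rewrite (d_psi_eq _ _ _ _ _ _ (derivable_pt_lim_wave_phase_psi L psi0 k r psi pr ppsi)).
  unfold wave_phase; rewrite wave_re_S.
  (* no [r <> 0] needed: at [r = 0] both sides use [/ 0 = 0] *)
  unfold Rdiv; rewrite Rinv_mult.
  replace (ppsi * (/ L * / r) * (- L * wave_im k pr (ppsi * / r) (L * psi + psi0)))
    with (- (ppsi * / r) * wave_im k pr (ppsi * / r) (L * psi + psi0) * (/ L * L)) by ring.
  rewrite Rinv_l by exact HL; ring.
Qed.

Lemma Dop_iter_cos L psi0 k : L <> 0 ->
  Nat.iter k (Dop L) (fun (r psi pr ppsi : R) => cos (L * psi + psi0)) = wave_phase L psi0 k.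
Proof.
  intros HL; induction k as [|k IHk]; [reflexivity|].
  simpl Nat.iter; rewrite IHk; exact (Dop_wave_phase L psi0 k HL).
Qed.

Lemma derivable_pt_lim_wave_phase_r L psi0 k r psi pr ppsi : r <> 0 ->
  derivable_pt_lim (fun t => wave_phase L psi0 k t psi pr ppsi) r
    (INR k * wave_im (pred k) pr (ppsi / r) (L * psi + psi0) * (ppsi / r ^ 2)).
Proof.
  intros Hr; eapply derivable_pt_lim_val_eq.
  - apply (derivable_pt_lim_comp (fun t => ppsi / t) (fun q => wave_re k pr q (L * psi + psi0))).
    + apply is_derive_Reals; auto_derive; [exact Hr | reflexivity].
    + apply derivable_pt_lim_wave_q.
  - field; exact Hr.
Qed.

Lemma derivable_pt_lim_wave_phase_pr L psi0 k r psi pr ppsi :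
  derivable_pt_lim (fun t => wave_phase L psi0 k r psi t ppsi) pr
    (INR k * wave_re (pred k) pr (ppsi / r) (L * psi + psi0)).
Proof. apply derivable_pt_lim_wave_p. Qed.

Lemma derivable_pt_lim_wave_phase_ppsi L psi0 k r psi pr ppsi : r <> 0 ->
  derivable_pt_lim (fun t => wave_phase L psi0 k r psi pr t) ppsi
    (- INR k * wave_im (pred k) pr (ppsi / r) (L * psi + psi0) / r).
Proof.
  intros Hr; eapply derivable_pt_lim_val_eq.
  - apply (derivable_pt_lim_comp (fun t => t / r) (fun q => wave_re k pr q (L * psi + psi0))).
    + apply is_derive_Reals; auto_derive; [exact I | reflexivity].
    + apply derivable_pt_lim_wave_q.
  - field; exact Hr.
Qed.

Lemma derivable_pt_lim_Hg_r r psi pr ppsi : r <> 0 ->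
  derivable_pt_lim (fun t => Hg t psi pr ppsi) r (- ppsi ^ 2 / r ^ 3).
Proof.
  intros Hr; apply is_derive_Reals; unfold Hg; auto_derive.
  - rewrite Rmult_1_r; exact (Rmult_integral_contrapositive_currified r r Hr Hr).
  - field; exact Hr.
Qed.

Lemma derivable_pt_lim_Hg_psi r psi pr ppsi :
  derivable_pt_lim (fun t => Hg r t pr ppsi) psi 0.
Proof. apply derivable_pt_lim_const. Qed.

Lemma derivable_pt_lim_Hg_pr r psi pr ppsi :
  derivable_pt_lim (fun t => Hg r psi t ppsi) pr pr.
Proof. apply is_derive_Reals; unfold Hg; auto_derive; [exact I | field]. Qed.

Lemma derivable_pt_lim_Hg_ppsi r psi pr ppsi : r <> 0 ->
  derivable_pt_lim (fun t => Hg r psi pr t) ppsi (ppsi / r ^ 2).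
Proof. intros Hr; apply is_derive_Reals; unfold Hg; auto_derive; [exact I | field; exact Hr]. Qed.

Lemma wave_phase_constant_of_motion k psi0 :
  constant_of_motion (wave_phase (INR k) psi0 k) Hg.
Proof.
  intros r psi pr ppsi Hr.
  assert (Hr0 : r <> 0) by lra.
  do 8 eexists.
  split; [apply derivable_pt_lim_wave_phase_r, Hr0|].
  split; [apply derivable_pt_lim_wave_phase_psi|].
  split; [apply derivable_pt_lim_wave_phase_pr|].
  split; [apply derivable_pt_lim_wave_phase_ppsi, Hr0|].
  split; [apply derivable_pt_lim_Hg_r, Hr0|].
  split; [apply derivable_pt_lim_Hg_psi|].
  split; [apply derivable_pt_lim_Hg_pr|].
  split; [apply derivable_pt_lim_Hg_ppsi, Hr0|].
  set (q := ppsi / r); set (th := INR k * psi + psi0).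
  (* the factor [INR k] coming from [z^k] cancels the [L = INR k] coming from [d/dpsi] *)
  transitivity (ppsi / r ^ 2 *
    (INR k * (pr * wave_im (pred k) pr q th + q * wave_re (pred k) pr q th)
     - INR k * wave_im k pr q th)).
  - unfold q; field; exact Hr0.
  - rewrite INR_mul_wave_im_pred; ring.
Qed.

Theorem mainTheorem5 (lam : nat) (psi0 : R) (Hlam : (0 < lam)%nat) :
  constant_of_motion
    (Nat.iter lam (Dop (INR lam))
       (fun (r psi pr ppsi : R) => cos (INR lam * psi + psi0)))
    Hg.
Proof.
  rewrite Dop_iter_cos by (apply not_0_INR; lia).
  apply wave_phase_constant_of_motion.
Qed.
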